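(* Let $\Gamma\subset\mathrm{PSL}_2\mathbb{C}$ be a finite-covolume Kleinian group whose traces all lie in $R$, the ring of integers of the number field $\mathbb{Q}(\mathrm{tr}\,\Gamma)$. If $A,B,X,Y\in\Gamma$ satisfy $\langle A,B\rangle=\Gamma=\langle X,Y\rangle$, then $2-\mathrm{tr}[X,Y]$ is a unit multiple of $2-\mathrm{tr}[A,B]$ in $R$, i.e. $2-\mathrm{tr}[X,Y]=u\,(2-\mathrm{tr}[A,B])$ for some $u\in R^*$.
   Context: $\mathbb{Q}(\mathrm{tr}\,\Gamma)$ is the field generated over $\mathbb{Q}$ by the traces of (lifts to $\mathrm{SL}_2\mathbb{C}$ of) elements of $\Gamma$. $[X,Y]=XYX^{-1}Y^{-1}$; its trace is independent of the choice of lifts. *)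

From HB Require Import structures.
From mathcomp Require Import all_boot all_order all_algebra.
From mathcomp Require Import all_classical all_reals all_analysis.
From mathcomp Require Import complex.
Set Implicit Arguments. Unset Strict Implicit. Unset Printing Implicit Defensive.
Import Order.TTheory GRing.Theory Num.Theory.
Local Open Scope classical_set_scope.
Local Open Scope ring_scope.

Section Kleinian.
Variable R : realType.
Local Notation C := (R[i]).
Local Notation M := ('M[C]_2).

Definition cR (x : R) : C := Complex x 0.

(** Groups Γ ⊂ PSL_2(C) are represented by their full preimage in SL_2(C):
    a set of determinant-one matrices, closed under products and inverses,
    containing I and -I. *)
Definition SL2_lift_group (G : set M) : Prop :=
  [/\ forall g, G g -> \det g = 1,
      G 1%:M, G (- 1%:M),
      (forall g h, G g -> G h -> G (g *m h)) &
      (forall g, G g -> G (invmx g))].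

Definition discrete_lift (G : set M) : Prop :=
  exists2 eps : R, 0 < eps &
    forall g, G g -> (forall i j, `|g i j - (1%:M : M) i j| < cR eps) -> g = 1%:M.

Inductive generated (S : set M) : M -> Prop :=
  | gen_base g : S g -> generated S g
  | gen_one : generated S 1%:M
  | gen_mul g h : generated S g -> generated S h -> generated S (g *m h)
  | gen_inv g : generated S g -> generated S (invmx g).

(** In PSL_2(C), <A,B> = Γ: the lifted group is generated by A, B and -I. *)
Definition generates_PSL (G : set M) (A B : M) : Prop :=
  forall g, G g <-> generated [set A; B; - 1%:M] g.

(** Upper half-space model of H^3: points ((x,y),t) with t > 0, z = x + iy. *)
Definition H3 : set ((R * R) * R) := [set p | 0 < p.2].

(** Poincaré extension of g = [[a,b],[c,d]] acting on (z,t) in H^3: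
    g(z + tj) = ((az+b) conj(cz+d) + a conj(c) t^2 + t j) / (|cz+d|^2 + |c|^2 t^2). *)
Definition act (g : M) (p : (R * R) * R) : (R * R) * R :=
  let z := Complex p.1.1 p.1.2 in
  let t := p.2 in
  let a := g 0 0 in let b := g 0 1 in let c := g 1 0 in let d := g 1 1 in
  let den : C := `|c * z + d| ^+ 2 + `|c| ^+ 2 * cR (t ^+ 2) in
  let w := ((a * z + b) * (c * z + d)^* + a * c^* * cR (t ^+ 2)) / den in
  ((complex.Re w, complex.Im w), t / complex.Re den).

Definition leb3 := (((@lebesgue_measure R) \x (@lebesgue_measure R)) \x (@lebesgue_measure R))%E.

Definition hypvol (F : set ((R * R) * R)) : \bar R :=
  (\int[leb3]_(p in F) (p.2 ^-3)%:E)%E.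

Definition finite_covolume (G : set M) : Prop :=
  exists F : set ((R * R) * R),
    [/\ measurable F, F `<=` H3,
        (forall p, H3 p -> exists g q, [/\ G g, F q & act g q = p]),
        (forall g, G g -> g <> 1%:M -> g <> - 1%:M ->
           leb3.-negligible (F `&` [set p | exists2 q, F q & act g q = p])) &
        (hypvol F < +oo)%E].

Definition kleinian_finite_covolume (G : set M) : Prop :=
  [/\ SL2_lift_group G, discrete_lift G & finite_covolume G].

(** Q(tr Γ): the smallest subfield of C containing all traces. *)
Definition trace_field (G : set M) (x : C) : Prop :=
  forall S : set C,
    S 0 -> S 1 ->
    (forall u v, S u -> S v -> S (u + v)) ->
    (forall u, S u -> S (- u)) ->
    (forall u v, S u -> S v -> S (u * v)) ->
    (forall u, S u -> S (u^-1)) ->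
    (forall g, G g -> S (\tr g)) -> S x.

Definition algebraic_integer (x : C) : Prop :=
  exists2 p : {poly int}, p \is monic & root (map_poly intr p) x.

Definition trace_ring (G : set M) (x : C) : Prop :=
  trace_field G x /\ algebraic_integer x.

Definition trace_ring_unit (G : set M) (u : C) : Prop :=
  trace_ring G u /\ exists2 v, trace_ring G v & u * v = 1.

Definition comm (X Y : M) : M := X *m Y *m invmx X *m invmx Y.

End Kleinian.

From HB Require Import structures.
From mathcomp Require Import all_boot all_order all_algebra.
From mathcomp Require Import all_classical all_reals all_analysis.
From mathcomp Require Import complex.
From mathcomp Require Import ring.
Set Implicit Arguments. Unset Strict Implicit. Unset Printing Implicit Defensive.
Import Order.TTheory GRing.Theory Num.Theory.
Local Open Scope classical_set_scope.
Local Open Scope ring_scope.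

(* Over a ring S containing the traces, the S-span of 1, A, B, AB is closed
   under products and under inversion of determinant-one elements (since
   g^-1 = tr g - g), so it contains the whole group generated by A, B.
   For g, h in this span, gh - hg = (AB - BA) k with k in the span, and
   2 - tr [g, h] = det (gh - hg); taking determinants shows that
   2 - tr [X, Y] is an S-multiple of 2 - tr [A, B].  By symmetry each
   divides the other, so they differ by a unit. *)

Local Notation i0 := (@ord0 1).
Local Notation i1 := (@ord_max 1).

Lemma ord2P (i : 'I_2) : i = i0 \/ i = i1.
Proof. by case: i => [[|[|//]] ?]; [left | right]; apply: val_inj. Qed.

Lemma mx2_ext (F : Type) (P Q : 'M[F]_2) :
  P i0 i0 = Q i0 i0 -> P i0 i1 = Q i0 i1 ->
  P i1 i0 = Q i1 i0 -> P i1 i1 = Q i1 i1 -> P = Q.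
Proof.
move=> e00 e01 e10 e11; apply/matrixP => i j.
by case: (ord2P i) => ->; case: (ord2P j) => ->.
Qed.

Lemma big_ord2 (F : nmodType) (f : 'I_2 -> F) : \sum_(i < 2) f i = f i0 + f i1.
Proof. by rewrite big_ord_recl big_ord1; congr (_ + f _); apply: val_inj. Qed.

Lemma mxtrace_mx2 (F : nmodType) (P : 'M[F]_2) : \tr P = P i0 i0 + P i1 i1.
Proof. by rewrite /mxtrace big_ord2. Qed.

Lemma det_mx2 (F : comPzRingType) (P : 'M[F]_2) :
  \det P = P i0 i0 * P i1 i1 - P i0 i1 * P i1 i0.
Proof.
rewrite (expand_det_row P i0) big_ord2 /cofactor !det_mx11 !mxE.
have -> : lift i0 0 = i1 by apply: val_inj.
have -> : lift i1 0 = i0 by apply: val_inj.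
by rewrite /= expr0 expr1 mul1r mulN1r mulrN.
Qed.

Ltac mx2_expand := rewrite ?mxtrace_mx2 ?det_mx2; rewrite ?(mxE, big_ord2);
  rewrite ?eqxx ?[i0 == i1]/= ?[i1 == i0]/= ?mulr1n ?mulr0n.
Ltac mx2_ring := apply: mx2_ext; mx2_expand; ring.

Section Mx2Identities.
Variable F : comPzRingType.
Implicit Types (P Q g : 'M[F]_2) (a b c d : F).

Definition quad_comb P Q a b c d : 'M[F]_2 :=
  a%:M + b *: P + c *: Q + d *: (P *m Q).

Lemma mulmx_quad_comb_l P Q a b c d :
  P *m quad_comb P Q a b c d =
  quad_comb P Q (- b * \det P) (a + b * \tr P) (- d * \det P) (c + d * \tr P).
Proof. rewrite /quad_comb; mx2_ring. Qed.

Lemma mulmx_quad_comb_r P Q a b c d :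
  Q *m quad_comb P Q a b c d =
  quad_comb P Q
    (b * (\tr (P *m Q) - \tr P * \tr Q) - c * \det Q - d * \tr P * \det Q)
    (b * \tr Q + d * \det Q)
    (a + b * \tr P + c * \tr Q + d * \tr (P *m Q))
    (- b).
Proof. rewrite /quad_comb; mx2_ring. Qed.

Lemma mulmx_quad_comb P Q a b c d g :
  quad_comb P Q a b c d *m g =
  a *: g + b *: (P *m g) + c *: (Q *m g) + d *: (P *m (Q *m g)).
Proof. rewrite /quad_comb; mx2_ring. Qed.

Lemma mxtrace_quad_comb P Q a b c d :
  \tr (quad_comb P Q a b c d) = 2 * a + b * \tr P + c * \tr Q + d * \tr (P *m Q).
Proof. rewrite /quad_comb; mx2_expand; ring. Qed.

Lemma commutator_quad_comb P Q a b c d a' b' c' d' :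
  quad_comb P Q a b c d *m quad_comb P Q a' b' c' d'
    - quad_comb P Q a' b' c' d' *m quad_comb P Q a b c d =
  (P *m Q - Q *m P) *m
    quad_comb P Q (b * c' - c * b' + (b * d' - d * b') * \tr P)
      (d * b' - b * d') (d * c' - c * d') 0.
Proof. rewrite /quad_comb; mx2_ring. Qed.

Lemma det_quad_comb_lin P Q a b c :
  \det (quad_comb P Q a b c 0) = a ^+ 2 + b ^+ 2 * \det P + c ^+ 2 * \det Q
    + a * b * \tr P + a * c * \tr Q + b * c * (\tr P * \tr Q - \tr (P *m Q)).
Proof. rewrite /quad_comb; mx2_expand; ring. Qed.

Lemma det_commutator_quad_comb P Q a b c d a' b' c' d' :
  \det (quad_comb P Q a b c d *m quad_comb P Q a' b' c' d'
    - quad_comb P Q a' b' c' d' *m quad_comb P Q a b c d) =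
  \det (P *m Q - Q *m P) * \det (quad_comb P Q
    (b * c' - c * b' + (b * d' - d * b') * \tr P)
    (d * b' - b * d') (d * c' - c * d') 0).
Proof. by rewrite commutator_quad_comb det_mulmx. Qed.

Lemma det_subr1mx P : \det (P - 1%:M) = \det P - \tr P + 1.
Proof. mx2_expand; ring. Qed.

Lemma mulmx_trace_sub P : P *m ((\tr P)%:M - P) = (\det P)%:M.
Proof. mx2_ring. Qed.

End Mx2Identities.

Lemma invmx_det1 (F : comUnitRingType) (P : 'M[F]_2) :
  \det P = 1 -> invmx P = (\tr P)%:M - P.
Proof.
move=> dP; have := mulmx_trace_sub P; rewrite dP => eP.
have [uP _] := mulmx1_unit eP.
by rewrite -[RHS](mulKmx uP) eP mulmx1.
Qed.

Lemma det_generated (R : realType) (P Q g : 'M[R[i]]_2) :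
  \det P = 1 -> \det Q = 1 -> generated [set P; Q; - 1%:M] g -> \det g = 1.
Proof.
move=> dP dQ; elim=> {g} [g [[->|->]|->]||g h _ dg _ dh|g _ dg] //.
- by mx2_expand; ring.
- exact: det1.
- by rewrite det_mulmx dg dh mulr1.
- by rewrite det_inv dg invr1.
Qed.

Section Order.
Variable R : realType.
Local Notation F := R[i].
Variable S : F -> Prop.
Hypotheses (S1 : S 1) (SB : forall x y, S x -> S y -> S (x - y))
  (SM : forall x y, S x -> S y -> S (x * y)).

Let S0 : S 0. Proof. by rewrite -(subrr 1); apply: SB. Qed.
Let SN x : S x -> S (- x). Proof. by rewrite -sub0r; apply: SB. Qed.
Let SD x y : S x -> S y -> S (x + y).
Proof. by move=> Sx Sy; rewrite -[y]opprK; apply/SB/SN. Qed.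

Variables P Q : 'M[F]_2.
Hypotheses (dP : \det P = 1) (dQ : \det Q = 1)
  (StrP : S (\tr P)) (StrQ : S (\tr Q)) (StrPQ : S (\tr (P *m Q))).

Ltac S_closed := rewrite ?dP ?dQ; repeat first
  [ apply: SD | apply: SB | apply: SM | apply: SN | assumption ].

Definition in_order (g : 'M[F]_2) := exists a b c d,
  [/\ S a, S b, S c, S d & g = quad_comb P Q a b c d].

Lemma in_order_add g h : in_order g -> in_order h -> in_order (g + h).
Proof.
move=> [a [b [c [d [Sa Sb Sc Sd ->]]]]] [a' [b' [c' [d' [Sa' Sb' Sc' Sd' ->]]]]].
exists (a + a'), (b + b'), (c + c'), (d + d'); split; try exact: SD.
rewrite /quad_comb; mx2_ring.
Qed.

Lemma in_order_scale k g : S k -> in_order g -> in_order (k *: g).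
Proof.
move=> Sk [a [b [c [d [Sa Sb Sc Sd ->]]]]].
exists (k * a), (k * b), (k * c), (k * d); split; try exact: SM.
rewrite /quad_comb; mx2_ring.
Qed.

Lemma in_order_mull g : in_order g -> in_order (P *m g).
Proof.
move=> [a [b [c [d [Sa Sb Sc Sd ->]]]]]; rewrite mulmx_quad_comb_l.
by eexists _, _, _, _; split; last reflexivity; S_closed.
Qed.

Lemma in_order_mulr g : in_order g -> in_order (Q *m g).
Proof.
move=> [a [b [c [d [Sa Sb Sc Sd ->]]]]]; rewrite mulmx_quad_comb_r.
by eexists _, _, _, _; split; last reflexivity; S_closed.
Qed.

Lemma in_order_mul g h : in_order g -> in_order h -> in_order (g *m h).
Proof.
move=> [a [b [c [d [Sa Sb Sc Sd ->]]]]] Oh; rewrite mulmx_quad_comb.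
by do 3?apply: in_order_add; apply: in_order_scale;
  do ?apply: in_order_mull; do ?apply: in_order_mulr.
Qed.

Lemma in_order_tr g : in_order g -> S (\tr g).
Proof.
by move=> [a [b [c [d [Sa Sb Sc Sd ->]]]]]; rewrite mxtrace_quad_comb; S_closed.
Qed.

Lemma in_order_inv g : \det g = 1 -> in_order g -> in_order (invmx g).
Proof.
move=> dg Og; rewrite invmx_det1 //.
have Strg := in_order_tr Og.
move: Og => [a [b [c [d [Sa Sb Sc Sd eg]]]]].
exists (\tr g - a), (- b), (- c), (- d); split; S_closed.
rewrite eg /quad_comb; mx2_ring.
Qed.

Lemma generated_in_order g : generated [set P; Q; - 1%:M] g -> in_order g.
Proof.
have Sm1 : S (- 1) by apply: SN.
elim=> {g} [g [[->|->]|->]||g h _ Og _ Oh|g Gg Og].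
- by exists 0, 1, 0, 0; split => //; rewrite /quad_comb; mx2_ring.
- by exists 0, 0, 1, 0; split => //; rewrite /quad_comb; mx2_ring.
- by exists (- 1), 0, 0, 0; split => //; rewrite /quad_comb; mx2_ring.
- by exists 1, 0, 0, 0; split => //; rewrite /quad_comb; mx2_ring.
- exact: in_order_mul.
- exact/in_order_inv/Og/(det_generated dP dQ).
Qed.

Lemma S_det_quad_comb a b c : S a -> S b -> S c ->
  S (\det (quad_comb P Q a b c 0)).
Proof. by move=> Sa Sb Sc; rewrite det_quad_comb_lin; S_closed. Qed.

Lemma det_commutator_in_order g h : in_order g -> in_order h ->
  exists2 s, S s & \det (g *m h - h *m g) = s * \det (P *m Q - Q *m P).
Proof.
move=> [a [b [c [d [Sa Sb Sc Sd ->]]]]] [a' [b' [c' [d' [Sa' Sb' Sc' Sd' ->]]]]].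
rewrite det_commutator_quad_comb mulrC.
by eexists; last reflexivity; apply: S_det_quad_comb; S_closed.
Qed.

End Order.

Section TraceRing.
Variable R : realType.
Variable G : set 'M[R[i]]_2.

Lemma trace_ring1 : trace_ring G 1.
Proof. by split; [move=> T _ S1 | exact: integral1]. Qed.

Lemma trace_ring_sub x y : trace_ring G x -> trace_ring G y -> trace_ring G (x - y).
Proof.
move=> [Fx Ix] [Fy Iy]; split; last exact: integral_sub.
move=> T T0 T1 TD TN TM TV Ttr.
by apply: (TD); [apply: Fx | apply: (TN); apply: Fy].
Qed.

Lemma trace_ring_mul x y : trace_ring G x -> trace_ring G y -> trace_ring G (x * y).
Proof.
move=> [Fx Ix] [Fy Iy]; split; last exact: integral_mul.
move=> T T0 T1 TD TN TM TV Ttr.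
by apply: (TM); [apply: Fx | apply: Fy].
Qed.

Lemma comm_trace_det (g h : 'M[R[i]]_2) : \det g = 1 -> \det h = 1 ->
  2 - \tr (comm g h) = \det (g *m h - h *m g).
Proof.
move=> dg dh.
have ug : g \in unitmx by rewrite unitmxE dg unitr1.
have uh : h \in unitmx by rewrite unitmxE dh unitr1.
have -> : g *m h - h *m g = (comm g h - 1%:M) *m (h *m g).
  by rewrite mulmxBl mul1mx /comm -!mulmxA (mulKmx uh) mulVmx // mulmx1.
rewrite det_mulmx det_subr1mx /comm !det_mulmx !det_inv dg dh.
by rewrite invr1 !mulr1; ring.
Qed.

Hypotheses (hSL : SL2_lift_group G)
  (htr : forall g, G g -> trace_ring G (\tr g)).

Lemma comm_defect_dvd (A B X Y : 'M[R[i]]_2) :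
  G A -> G B -> G X -> G Y -> generates_PSL G A B ->
  exists2 s, trace_ring G s & 2 - \tr (comm X Y) = s * (2 - \tr (comm A B)).
Proof.
case: hSL => det1 _ _ GM _ GA GB GX GY genAB.
have inG g : G g -> in_order (trace_ring G) A B g.
  move=> Gg; apply: (generated_in_order trace_ring1 (@trace_ring_sub)
    (@trace_ring_mul)) (proj1 (genAB g) Gg);
  by [exact: det1 | exact: htr | exact/htr/GM].
rewrite (comm_trace_det (det1 _ GX) (det1 _ GY)).
rewrite (comm_trace_det (det1 _ GA) (det1 _ GB)).
apply: (det_commutator_in_order trace_ring1 (@trace_ring_sub) (@trace_ring_mul));
  by [exact: det1 | exact: htr | exact/htr/GM | exact: inG].
Qed.

End TraceRing.

Theorem mainTheorem5 (R : realType) (G : set 'M[R[i]]_2)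
  (hG : kleinian_finite_covolume G)
  (htr : forall g, G g -> trace_ring G (\tr g))
  (A B X Y : 'M[R[i]]_2)
  (hA : G A) (hB : G B) (hX : G X) (hY : G Y)
  (hAB : generates_PSL G A B) (hXY : generates_PSL G X Y) :
  exists2 u : R[i], trace_ring_unit G u &
    2 - \tr (comm X Y) = u * (2 - \tr (comm A B)).
Proof.
case: hG => hSL _ _.
have [s Ss eXY] := comm_defect_dvd hSL htr hA hB hX hY hAB.
have [s' Ss' eAB] := comm_defect_dvd hSL htr hX hY hA hB hXY.
have [zAB|nzAB] := eqVneq (2 - \tr (comm A B)) 0.
  exists 1; last by rewrite eXY zAB !mulr0.
  by split; [exact: trace_ring1 | exists 1; [exact: trace_ring1 | rewrite mulr1]].
exists s => //; split => //; exists s' => //.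
by apply: (mulIf nzAB); rewrite mul1r mulrAC -eXY mulrC -eAB.
Qed.
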